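(* Let $Q$ be an admissible orientation of $\tilde A_n$ and $I,J$ indecomposable linearized semigroup ideals of $\Bbbk Q$ of type II such that $\Gamma_I\cup\Gamma_J=\Gamma$. Then $IJ$ decomposes into a direct sum of two non-zero ideals if and only if every isolated vertex $\omega$ of $\Gamma_I\cap\Gamma_J$ can be written as $\omega=\alpha\beta$ for some paths $\alpha\in I$ and $\beta\in J$.
   Context: $\Bbbk$ is an algebraically closed field. An admissible orientation of $\tilde A_n$ is a finite quiver $Q$ with $n$ vertices whose underlying undirected graph is a cycle, having no oriented cycle and at least one source; $k$ is the number of sources (= number of sinks). Paths include trivial paths $\varepsilon_x$; the product $\alpha\beta$ is the concatenation (first $\beta$, then $\alpha$) when defined and $0$ otherwise. Maximal paths are paths not properly contained as subpaths of other paths. A linearized semigroup ideal is an ideal spanned by a set $X$ of paths with $\alpha\omega\beta\in X$ whenever $\omega\in X$ and $\alpha\omega\beta$ is defined. $\Gamma$: vertices the maximal paths, edges the sources and sinks of $Q$, edge $x$ joining the two maximal paths having $x$ as an endpoint. $\Gamma_I$: vertices the maximal paths in $I$, edges the sources/sinks $x$ with $\varepsilon_x\in I$. An indecomposable linearized semigroup ideal $I$ is of type II if $\Gamma_I$ is a chain (path graph) with at least two vertices which is not all of $\Gamma$. *)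

From HB Require Import structures.
From mathcomp Require Import all_boot all_order all_algebra.
Set Implicit Arguments. Unset Strict Implicit. Unset Printing Implicit Defensive.
Import GRing.Theory.
Local Open Scope ring_scope.

(* A quiver whose underlying graph is a cycle on the n vertices 'I_n:
   for each a : 'I_n there is an arrow a joining the vertices a and ordS a
   (successor mod n). *)
Section PathAlgebra.
Variable n : nat.
Variable o : 'I_n -> bool.

Definition asrc (a : 'I_n) : 'I_n := if o a then a else ordS a.
Definition atgt (a : 'I_n) : 'I_n := if o a then ordS a else a.

(* raw path: (starting vertex, arrows in order of traversal) *)
Definition rpath : Type := ('I_n * seq 'I_n)%type.

Fixpoint is_walk (x : 'I_n) (s : seq 'I_n) : bool :=
  if s is a :: s' then (asrc a == x) && is_walk (atgt a) s' else true.

Definition pvalid (p : rpath) : bool := is_walk p.1 p.2.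
Definition pstart (p : rpath) : 'I_n := p.1.
Definition pend (p : rpath) : 'I_n := foldl (fun _ a => atgt a) p.1 p.2.

Definition triv (x : 'I_n) : rpath := (x, [::]).

(* concatenation alpha beta = first beta, then alpha (defined when
   pend beta = pstart alpha) *)
Definition pcat (al be : rpath) : rpath := (be.1, be.2 ++ al.2).

Definition composable (al be : rpath) : Prop :=
  pvalid al /\ pvalid be /\ pend be = pstart al.

Definition is_source (x : 'I_n) : Prop := forall a, atgt a != x.
Definition is_sink (x : 'I_n) : Prop := forall a, asrc a != x.
Definition srcsink (x : 'I_n) : Prop := is_source x \/ is_sink x.

Definition admissible : Prop :=
  (forall p : rpath, pvalid p -> p.2 <> [::] -> pend p <> pstart p) /\
  (exists x, is_source x).

Definition subpath (p q : rpath) : Prop :=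
  exists a b : rpath, composable a p /\ composable p b /\ q = pcat a (pcat p b).

Definition maximal_path (p : rpath) : Prop :=
  pvalid p /\ forall q, pvalid q -> subpath p q -> q = p.

Definition endpoint (x : 'I_n) (p : rpath) : Prop := pstart p = x \/ pend p = x.

Variable k : fieldType.

(* The path algebra kQ: functions on raw paths vanishing on non-paths
   (the basis element of a path p is delta p). *)
Definition elt := rpath -> k.
Definition in_kQ (f : elt) : Prop := forall p, ~~ pvalid p -> f p = 0.
Definition zero_elt : elt := fun _ => 0.
Definition delta (p : rpath) : elt := fun q => (q == p)%:R.

(* multiplication: (f g)(p) = sum over factorisations p = alpha beta of
   f(alpha) g(beta) *)
Definition kmul (f g : elt) : elt := fun p =>
  \sum_(i < (size p.2).+1)
     f (pend (p.1, take i p.2), drop i p.2) * g (p.1, take i p.2).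

Definition is_ideal (I : elt -> Prop) : Prop :=
  (forall f, I f -> in_kQ f) /\ I zero_elt /\
  (forall f g, I f -> I g -> I (fun p => f p + g p)) /\
  (forall c f, I f -> I (fun p => c * f p)) /\
  (forall f g, in_kQ f -> I g -> I (kmul f g)) /\
  (forall f g, I f -> in_kQ g -> I (kmul f g)).

Definition nonzero_ideal (I : elt -> Prop) : Prop :=
  exists f, I f /\ f <> zero_elt.

Definition decomposes (I : elt -> Prop) : Prop :=
  exists A B : elt -> Prop,
    is_ideal A /\ is_ideal B /\ nonzero_ideal A /\ nonzero_ideal B /\
    (forall f, A f -> B f -> f = zero_elt) /\
    (forall f, I f <-> exists a b, A a /\ B b /\ f = (fun p => a p + b p)).

Definition indecomposable_ideal (I : elt -> Prop) : Prop :=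
  is_ideal I /\ nonzero_ideal I /\ ~ decomposes I.

Definition iprod (I J : elt -> Prop) : elt -> Prop := fun f =>
  exists m (F G : 'I_m -> elt), (forall i, I (F i) /\ J (G i)) /\
    f = (fun p => \sum_(i < m) kmul (F i) (G i) p).

Definition in_span (X : rpath -> Prop) (f : elt) : Prop :=
  exists s : seq (k * rpath), (forall cp, cp \in s -> X cp.2) /\
    f = (fun q => \sum_(cp <- s) cp.1 * delta cp.2 q).

Definition linearized_semigroup_ideal (I : elt -> Prop) : Prop :=
  is_ideal I /\
  exists X : rpath -> Prop,
    (forall p, X p -> pvalid p) /\
    (forall w al be, X w -> composable al w -> composable w be ->
        X (pcat al (pcat w be))) /\
    (forall f, I f <-> in_span X f).

(* Gamma_I : vertices the maximal paths in I, edges the sources/sinks x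
   with eps_x in I.  Gamma = Gamma for I = kQ. *)
Definition GV (I : elt -> Prop) (p : rpath) : Prop := maximal_path p /\ I (delta p).
Definition GE (I : elt -> Prop) (x : 'I_n) : Prop := srcsink x /\ I (delta (triv x)).

Definition is_chain (V : rpath -> Prop) (E : 'I_n -> Prop) : Prop :=
  exists (vs : seq rpath) (es : seq 'I_n),
    uniq vs /\ uniq es /\ size vs = (size es).+1 /\
    (forall p, V p <-> p \in vs) /\ (forall x, E x <-> x \in es) /\
    (forall i x, onth es i = Some x ->
       exists u v, onth vs i = Some u /\ onth vs i.+1 = Some v /\
                   endpoint x u /\ endpoint x v).

Definition type_II (I : elt -> Prop) : Prop :=
  indecomposable_ideal I /\ linearized_semigroup_ideal I /\
  is_chain (GV I) (GE I) /\
  (exists p q, GV I p /\ GV I q /\ p <> q) /\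
  ~ ((forall p, maximal_path p -> GV I p) /\ (forall x, srcsink x -> GE I x)).

End PathAlgebra.

From mathcomp Require Import all_boot all_order all_algebra.
From Stdlib Require Import Classical FunctionalExtensionality.
From mathcomp Require Import zify.
Set Implicit Arguments. Unset Strict Implicit. Unset Printing Implicit Defensive.
Import GRing.Theory.

Lemma functional_path_eq (T : Type) (e : T -> T -> bool) (stop : T -> Prop) :
  (forall x y y', e x y -> e x y' -> y = y') -> (forall x y, stop x -> ~~ e x y) ->
  forall c s1 s2, path e c s1 -> path e c s2 ->
  stop (last c s1) -> stop (last c s2) -> s1 = s2.
Proof.
move=> efun estop c s1; elim: s1 c => [|d1 s1 IH] c [|d2 s2] //=.
- by move=> _ /andP [h _] /(estop _ d2); rewrite h.
- by move=> /andP [h _] _ _ /(estop _ d1); rewrite h.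
move=> /andP [h1 p1] /andP [h2 p2] t1 t2; have e12 := efun _ _ _ h1 h2; subst d2.
by rewrite (IH d1 s2).
Qed.

Lemma count_eq2 (T : eqType) (s : seq T) (P : pred T) x1 x2 :
  uniq s -> x1 \in s -> x2 \in s -> x1 != x2 -> P x1 -> P x2 ->
  (forall a b c, a \in s -> b \in s -> c \in s -> P a -> P b -> P c ->
     [\/ a = b, a = c | b = c]) ->
  count P s = 2.
Proof.
move=> us s1 s2 ne p1 p2 three; rewrite -size_filter; apply/eqP; rewrite eqn_leq.
apply/andP; split.
- apply: (@uniq_leq_size _ _ [:: x1; x2]); first by rewrite filter_uniq.
  move=> y; rewrite mem_filter !inE => /andP [py sy].
  by case: (three y x1 x2 sy s1 s2 py p1 p2) => [->|->|/eqP]; rewrite ?eqxx ?orbT // (negbTE ne).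
- apply: (@uniq_leq_size _ [:: x1; x2]); first by rewrite /= inE ne.
  by move=> y; rewrite !inE mem_filter => /orP [] /eqP ->; rewrite ?p1 ?p2 ?s1 ?s2.
Qed.

Lemma size_undup_cat (T : eqType) (s t : seq T) : uniq s -> uniq t ->
  size (undup (s ++ t)) + count (mem t) s = size s + size t.
Proof.
move=> us ut; rewrite undup_cat !undup_id // size_cat size_filter.
rewrite -[count _ s]/(count (predC (mem t)) s).
by have := count_predC (mem t) s; lia.
Qed.

Lemma onth_nth_lt (T : Type) (s : seq T) i x0 : i < size s -> onth s i = Some (nth x0 s i).
Proof. by elim: s i => [|y s IH] [|i] //= /IH. Qed.
Section Cycle.
Variables (n : nat) (o : 'I_n -> bool).

Local Notation src := (asrc o).
Local Notation tgt := (atgt o).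

Definition next_arrow (b c : 'I_n) := tgt b == src c.

Lemma source_or_arrow_in (x : 'I_n) : is_source o x \/ exists c, tgt c = x.
Proof.
case: (boolP [forall a, tgt a != x]) => [/forallP|/forallPn [c /negPn /eqP]];
  by [left | right; exists c].
Qed.

Lemma sink_or_arrow_out (x : 'I_n) : is_sink o x \/ exists c, src c = x.
Proof.
case: (boolP [forall a, src a != x]) => [/forallP|/forallPn [c /negPn /eqP]];
  by [left | right; exists c].
Qed.

Lemma source_not_sink (x : 'I_n) : is_source o x -> is_sink o x -> False.
Proof.
move=> /(_ x) + /(_ x).
by rewrite /asrc /atgt; case: (o x); rewrite eqxx.
Qed.

Definition walk_end (x : 'I_n) (s : seq 'I_n) := foldl (fun _ a => tgt a) x s.

Lemma pendE (p : rpath n) : pend o p = walk_end p.1 p.2.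
Proof. by []. Qed.

Lemma walk_end_cat x s1 s2 : walk_end x (s1 ++ s2) = walk_end (walk_end x s1) s2.
Proof. exact: foldl_cat. Qed.

Lemma walk_end_rcons x s c : walk_end x (rcons s c) = tgt c.
Proof. by rewrite -cats1 walk_end_cat. Qed.

Lemma walk_end_tgt c s : walk_end (tgt c) s = tgt (last c s).
Proof. by elim: s c => [|d s IH] c //=; rewrite -IH. Qed.

Lemma is_walk_cat x s1 s2 :
  is_walk o x (s1 ++ s2) = is_walk o x s1 && is_walk o (walk_end x s1) s2.
Proof. by elim: s1 x => [|a s1 IH] x //=; rewrite IH andbA. Qed.

Lemma is_walk_path c s : is_walk o (tgt c) s = path next_arrow c s.
Proof. by elim: s c => [|d s IH] c //=; rewrite IH /next_arrow eq_sym. Qed.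

Lemma pvalid_pcat (a p : rpath n) : pend o p = pstart a ->
  pvalid o (pcat a p) = pvalid o p && pvalid o a.
Proof. by case: a p => y s [x t] /= e; rewrite /pvalid /= is_walk_cat -[walk_end x t]/(pend o (x, t)) e. Qed.

Lemma pend_pcat (a p : rpath n) : pend o p = pstart a -> pend o (pcat a p) = pend o a.
Proof. by case: a p => y s [x t] /= e; rewrite !pendE /= walk_end_cat -[walk_end x t]/(pend o (x, t)) e. Qed.

Lemma pcat_triv_l y (p : rpath n) : pcat (triv y) p = p.
Proof. by case: p => x s; rewrite /pcat cats0. Qed.

Lemma pcat_triv_r (p : rpath n) : pcat p (triv (pstart p)) = p.
Proof. by case: p. Qed.

Lemma pcatA (a b c : rpath n) : pcat a (pcat b c) = pcat (pcat a b) c.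
Proof. by rewrite /pcat /= catA. Qed.

Lemma subpath_trans (p q w : rpath n) : subpath o p q -> subpath o q w -> subpath o p w.
Proof.
move=> [a [b [[va [vp ea]] [[_ [vb eb]] ->]]]] [a' [b' [[va' [vq ea']] [[_ [vb' eb']] ->]]]].
have ea2 : pend o a = pstart a' by rewrite -ea' pend_pcat // pend_pcat.
exists (pcat a' a), (pcat b b'); rewrite !pcatA; split.
  by split; [rewrite pvalid_pcat // va va' | split => //; rewrite pend_pcat].
by split=> //; split=> //; split; [rewrite pvalid_pcat // vb vb' | rewrite pend_pcat].
Qed.

Lemma triv_subpath_cases (w a b : rpath n) y :
  composable o a (triv y) -> composable o (triv y) b -> w = pcat a (pcat (triv y) b) ->
  endpoint o y w \/
  exists L cin cout R, [/\ w.2 = L ++ cin :: cout :: R, tgt cin = y & src cout = y].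
Proof.
move=> [va [_ ea]] [_ [_ eb]] ->.
case/lastP Hb : b.2 => [|L cin].
  by left; left; move: eb; rewrite pendE Hb.
case Ha : a.2 => [|cout R].
  by left; right; rewrite pend_pcat ?pend_pcat // pendE Ha.
right; exists L, cin, cout, R; split.
- by rewrite /= Hb Ha cats0 cat_rcons.
- by move: eb; rewrite pendE Hb walk_end_rcons.
- by move: va; rewrite /pvalid Ha /= => /andP [/eqP ->].
Qed.

Definition acyclic := forall p : rpath n, pvalid o p -> p.2 <> [::] -> pend o p <> pstart p.

Hypothesis acyc : acyclic.

Lemma pvalid_size (p : rpath n) : pvalid o p -> size p.2 < n.
Proof.
case: p => x s /= ws; rewrite ltnNge; apply/negP => hs.
pose f (i : 'I_(size s).+1) := walk_end x (take i s).
have /injectivePn [i [j ne fij]] : ~~ injectiveb f.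
  by apply/injectiveP => /leq_card; rewrite !card_ord; lia.
wlog ij : i j ne fij / i < j.
  move=> W; case: (ltngtP i j) => [|ji|/val_inj eij]; first exact: W.
    by apply: (W j i) => //; rewrite eq_sym.
  by rewrite eij eqxx in ne.
have jle : j <= size s by rewrite -ltnS.
have take_j : take j s = take i s ++ take (j - i) (drop i s).
  by rewrite -takeD subnKC // ltnW.
apply: (acyc (p := (f i, take (j - i) (drop i s)))) => /=.
- move: ws; rewrite /pvalid /= -{1}(cat_take_drop j s) take_j -catA is_walk_cat.
  by case/andP=> _; rewrite is_walk_cat => /andP [].
- by move/(congr1 size); rewrite size_take size_drop; case: ifP => /=; lia.
- by rewrite pendE /= -walk_end_cat -take_j fij.
Qed.

Lemma endpoint_subpath (w : rpath n) x : pvalid o w -> endpoint o x w -> subpath o (triv x) w.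
Proof.
move=> vw [<-|<-].
  by exists w, (triv (pstart w)); rewrite pcat_triv_r; do !split.
by exists (triv (pend o w)), w; rewrite !pcat_triv_l; do !split.
Qed.

Lemma pvalid_loop (p : rpath n) : pvalid o p -> pend o p = pstart p -> p = triv (pstart p).
Proof. by case: p => x [|c s] vp e //; case: (acyc vp). Qed.

Lemma extend_to_sink (p : rpath n) : pvalid o p ->
  exists a, composable o a p /\ is_sink o (pend o (pcat a p)).
Proof.
move=> vp; suff ext m : forall q, pvalid o q -> n - size q.2 <= m ->
    exists a, composable o a q /\ is_sink o (pend o (pcat a q)) by exact: (ext _ p vp).
elim: m => [|m IH] q vq hm; first by have := pvalid_size vq; lia.
case: (sink_or_arrow_out (pend o q)) => [sk|[c hc]].
  by exists (triv (pend o q)); rewrite pcat_triv_l.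
have vqc : pvalid o (q.1, rcons q.2 c).
  by rewrite /pvalid /= -cats1 is_walk_cat [is_walk _ _ _]vq /= hc eqxx.
have [|a [[va [_ ea]] sk]] := IH _ vqc; first by rewrite size_rcons; lia.
have a1 : a.1 = tgt c by rewrite -[a.1]/(pstart a) -ea pendE walk_end_rcons.
exists (pend o q, c :: a.2); split; first by rewrite /composable /pvalid /= hc eqxx -a1.
by move: sk; rewrite /pcat /= cat_rcons.
Qed.

Lemma extend_to_source (p : rpath n) : pvalid o p ->
  exists b, composable o p b /\ is_source o (pstart (pcat p b)).
Proof.
move=> vp; suff ext m : forall q, pvalid o q -> n - size q.2 <= m ->
    exists b, composable o q b /\ is_source o (pstart (pcat q b)) by exact: (ext _ p vp).
elim: m => [|m IH] q vq hm; first by have := pvalid_size vq; lia.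
case: (source_or_arrow_in (pstart q)) => [sr|[c hc]].
  by exists (triv (pstart q)); rewrite pcat_triv_r.
have vcq : pvalid o (src c, c :: q.2) by rewrite /pvalid /= eqxx /= hc.
have [|b [[_ [vb eb]] sr]] := IH _ vcq; first by rewrite /=; lia.
exists (b.1, rcons b.2 c); split; last exact: sr.
split; [exact: vq | split; last by rewrite pendE walk_end_rcons hc].
rewrite /pvalid /= -cats1 is_walk_cat [is_walk _ _ _]vb /=.
by rewrite -[walk_end _ _]/(pend o b) eb eqxx.
Qed.

Lemma composable_sink (a p : rpath n) :
  composable o a p -> is_sink o (pend o p) -> a = triv (pend o p).
Proof.
case: a => y [|c s] [va [_ e]] sk; first by rewrite /triv e.
by move: va (sk c); rewrite /pvalid e /= => /andP [/eqP ->]; rewrite eqxx.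
Qed.

Lemma composable_source (p b : rpath n) :
  composable o p b -> is_source o (pstart p) -> b = triv (pstart p).
Proof.
case: b => y s [_ [_ e]] sr; case/lastP: s e => [|s c] e; first by rewrite /triv -e.
by move: (sr c); rewrite -e pendE /= walk_end_rcons eqxx.
Qed.

Lemma maximal_pathP (w : rpath n) :
  maximal_path o w <-> [/\ pvalid o w, is_source o (pstart w) & is_sink o (pend o w)].
Proof.
split=> [[vw mw] | [vw sr sk]]; last first.
  split=> // q _ [a [b [ca [cb ->]]]].
  by rewrite (composable_sink ca sk) (composable_source cb sr) pcat_triv_r pcat_triv_l.
have grows a b : composable o a w -> composable o w b -> 0 < size a.2 + size b.2 -> False.
  move=> ca cb pos; have [va [_ ea]] := ca; have [_ [vb eb]] := cb.
  have vq : pvalid o (pcat a (pcat w b)) by rewrite !pvalid_pcat ?pend_pcat // vb vw va.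
  have sub : subpath o w (pcat a (pcat w b)) by exists a, b.
  by have := congr1 (fun p : rpath n => size p.2) (mw _ vq sub); rewrite /= !size_cat; lia.
split=> //.
- case: (source_or_arrow_in (pstart w)) => // [[c hc]].
  case: (grows (triv (pend o w)) (src c, [:: c])) => //.
  by split=> //; split; rewrite /pvalid //= eqxx.
- case: (sink_or_arrow_out (pend o w)) => // [[c hc]].
  case: (grows (pend o w, [:: c]) (triv (pstart w))) => //.
  by split; rewrite /pvalid //= hc eqxx.
Qed.

Lemma maximal_path_valid (w : rpath n) : maximal_path o w -> pvalid o w.
Proof. by case. Qed.

Lemma maximal_path_source (w : rpath n) : maximal_path o w -> is_source o (pstart w).
Proof. by case/maximal_pathP. Qed.

Lemma maximal_path_sink (w : rpath n) : maximal_path o w -> is_sink o (pend o w).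
Proof. by case/maximal_pathP. Qed.

Lemma extend_to_maximal (p : rpath n) : pvalid o p ->
  exists a b, [/\ composable o a p, composable o p b & maximal_path o (pcat a (pcat p b))].
Proof.
move=> vp; have [b [[_ [vb eb]] sr]] := extend_to_source vp.
have vpb : pvalid o (pcat p b) by rewrite pvalid_pcat // vb vp.
have [a [[va [_ ea]] sk]] := extend_to_sink vpb.
have ea' : pend o p = pstart a by rewrite -ea pend_pcat.
exists a, b; split => //; apply/maximal_pathP; split=> //.
by rewrite pvalid_pcat // vpb va.
Qed.

Lemma endpoint_srcsink (w : rpath n) x : maximal_path o w -> endpoint o x w -> srcsink o x.
Proof.
by case/maximal_pathP=> _ sr sk [<-|<-]; [left | right].
Qed.

Hypothesis n_gt1 : 1 < n.

Lemma ordS_neq (x : 'I_n) : ordS x != x.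
Proof.
apply/eqP => /(congr1 val) /=; case: x => x /= lx.
case: (ltnP x.+1 n) => h; first by rewrite modn_small //; lia.
have -> : x.+1 = n by lia.
by rewrite modnn; lia.
Qed.

Lemma asrc_neq_atgt (a : 'I_n) : src a != tgt a.
Proof. by rewrite /asrc /atgt; case: (o a); [rewrite eq_sym|]; exact: ordS_neq. Qed.

Definition incident (a y : 'I_n) := (src a == y) || (tgt a == y).

Lemma incident_three (a b c y : 'I_n) :
  incident a y -> incident b y -> incident c y -> [\/ a = b, a = c | b = c].
Proof.
have near z : incident z y -> (z == y) || (z == ord_pred y).
  rewrite -[z == ord_pred y](inj_eq (@ordS_inj _)) ord_predK.
  by rewrite /incident /asrc /atgt; case: (o z); rewrite // orbC.
move=> /near/orP[]/eqP-> /near/orP[]/eqP-> /near/orP[]/eqP->;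
  first [by constructor 1 | by constructor 2 | by constructor 3].
Qed.

Lemma next_arrow_functional (b c c' : 'I_n) : next_arrow b c -> next_arrow b c' -> c = c'.
Proof.
move=> /eqP hc /eqP hc'.
have ib : incident b (tgt b) by rewrite /incident eqxx orbT.
have ic : incident c (tgt b) by rewrite /incident hc eqxx.
have ic' : incident c' (tgt b) by rewrite /incident hc' eqxx.
case: (incident_three ib ic ic') => // e;
  by move/eqP: (asrc_neq_atgt b); rewrite {1}e -?hc -?hc'.
Qed.

Lemma next_arrow_injective (b b' c : 'I_n) : next_arrow b c -> next_arrow b' c -> b = b'.
Proof.
move=> /eqP hb /eqP hb'.
have ic : incident c (src c) by rewrite /incident eqxx.
have ib : incident b (src c) by rewrite /incident hb eqxx orbT.
have ib' : incident b' (src c) by rewrite /incident hb' eqxx orbT.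
case: (incident_three ic ib ib') => // e;
  by move/eqP: (asrc_neq_atgt c); rewrite {2}e ?hb ?hb'.
Qed.

Lemma walk_backward x L c : is_walk o x (rcons L c) ->
  path (fun a b => next_arrow b a) c (rev L) /\ src (last c (rev L)) = x.
Proof.
elim: L x => [|d L IH] x /=; first by rewrite andbT => /eqP.
move=> /andP [/eqP hd /IH [pL sL]].
by rewrite rev_cons rcons_path last_rcons pL /= hd /next_arrow sL eqxx.
Qed.

Lemma maximal_path_arrow_eq (w w' : rpath n) L1 c R1 L2 R2 :
  maximal_path o w -> maximal_path o w' ->
  w.2 = L1 ++ c :: R1 -> w'.2 = L2 ++ c :: R2 -> w = w'.
Proof.
have split_at (u : rpath n) L R : maximal_path o u -> u.2 = L ++ c :: R ->
    [/\ u.1 = src (last c (rev L)), path next_arrow c R, is_sink o (tgt (last c R)),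
        path (fun a b => next_arrow b a) c (rev L) & is_source o (src (last c (rev L)))].
  case/maximal_pathP => vu sr sk eu.
  move: vu sk; rewrite /pvalid pendE eu -cat_rcons is_walk_cat walk_end_cat.
  rewrite walk_end_rcons is_walk_path walk_end_tgt => /andP [/walk_backward [pL sL] pR] sk.
  by split=> //; rewrite sL.
move=> mw mw' e1 e2.
have [x1 p1 k1 q1 s1] := split_at w _ _ mw e1.
have [x2 p2 k2 q2 s2] := split_at w' _ _ mw' e2.
have eR : R1 = R2.
  apply: (functional_path_eq (stop := fun b => is_sink o (tgt b))) p1 p2 k1 k2.
  - exact: next_arrow_functional.
  - by move=> a b sk; rewrite /next_arrow eq_sym sk.
have eL : L1 = L2.
  rewrite -(revK L1) -(revK L2); congr rev.
  apply: (functional_path_eq (stop := fun b => is_source o (src b))) q1 q2 s1 s2.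
  - by move=> a b b' h h'; apply: next_arrow_injective h h'.
  - by move=> a b sr; exact: sr.
by case: w w' e1 e2 x1 x2 {mw mw' p1 k1 q1 s1 p2 k2 q2 s2} => x s [x' s'] /= -> -> -> ->; rewrite eL eR.
Qed.

Lemma maximal_path_endpoint_three (w1 w2 w3 : rpath n) x :
  maximal_path o w1 -> maximal_path o w2 -> maximal_path o w3 ->
  endpoint o x w1 -> endpoint o x w2 -> endpoint o x w3 ->
  [\/ w1 = w2, w1 = w3 | w2 = w3].
Proof.
have arrow_at w : maximal_path o w -> endpoint o x w ->
    exists c L R, w.2 = L ++ c :: R /\ incident c x.
  move=> /maximal_pathP [+ sr sk]; case: w sr sk => y [|c s] sr sk vw ew.
    by case: (source_not_sink sr); rewrite -[pstart _]/(pend o (y, [::])).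
  case: ew => [ex|ex].
    by exists c, [::], s; move: vw; rewrite /pvalid /incident -ex => /andP [-> _].
  exists (last c s), (belast c s), [::]; rewrite /= cats1 -lastI; split=> //.
  by rewrite /incident -ex pendE /= walk_end_tgt eqxx orbT.
move=> m1 m2 m3 /(arrow_at _ m1) [c1 [L1 [R1 [e1 i1]]]].
move=> /(arrow_at _ m2) [c2 [L2 [R2 [e2 i2]]]] /(arrow_at _ m3) [c3 [L3 [R3 [e3 i3]]]].
case: (incident_three i1 i2 i3) => e; subst.
- by constructor 1; apply: (maximal_path_arrow_eq m1 m2 e1 e2).
- by constructor 2; apply: (maximal_path_arrow_eq m1 m3 e1 e3).
- by constructor 3; apply: (maximal_path_arrow_eq m2 m3 e2 e3).
Qed.

Lemma srcsink_two_maximal_paths x : srcsink o x ->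
  exists w1 w2, [/\ maximal_path o w1, maximal_path o w2, w1 <> w2,
                    endpoint o x w1 & endpoint o x w2].
Proof.
have ne : x != ord_pred x.
  by apply/eqP => e; have := ordS_neq (ord_pred x); rewrite ord_predK -e eqxx.
have ix : incident x x by rewrite /incident /asrc /atgt; case: (o x); rewrite eqxx ?orbT.
have ix' : incident (ord_pred x) x.
  by rewrite /incident /asrc /atgt ord_predK; case: (o _); rewrite eqxx ?orbT.
case=> [sr | sk].
- have mk c : incident c x -> exists R, maximal_path o (x, c :: R).
    move=> ic; have sc : src c = x by case/orP: ic => /eqP // h; case/eqP: (sr c).
    have vp : pvalid o (x, [:: c]) by rewrite /pvalid /= sc eqxx.
    have [a [b [_ cb mw]]] := extend_to_maximal vp.
    by exists a.2; move: mw; rewrite (composable_source cb sr).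
  have [[R1 m1] [R2 m2]] := (mk _ ix, mk _ ix').
  by exists (x, x :: R1), (x, ord_pred x :: R2); split=> //; [case=> /eqP; rewrite (negbTE ne) | left | left].
- have mk c : incident c x -> exists y L, maximal_path o (y, rcons L c).
    move=> ic; have tc : tgt c = x by case/orP: ic => /eqP // h; case/eqP: (sk c).
    have vp : pvalid o (src c, [:: c]) by rewrite /pvalid /= eqxx.
    have [a [b [ca _ mw]]] := extend_to_maximal vp.
    exists b.1, b.2; move: mw; rewrite (composable_sink ca).
    + by rewrite /pcat /= cats0 cats1.
    + by rewrite pendE /= tc.
  have [[y1 [L1 m1]] [y2 [L2 m2]]] := (mk _ ix, mk _ ix').
  have ex y L c : incident c x -> endpoint o x (y, rcons L c).
    by move=> ic; right; rewrite pendE walk_end_rcons; case/orP: ic => /eqP // h; case/eqP: (sk c).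
  exists (y1, rcons L1 x), (y2, rcons L2 (ord_pred x)); split=> //; try exact: ex.
  by case=> _ /rcons_inj [_ /eqP]; exact/negP.
Qed.

Lemma maximal_paths_common_subpath (w w' p : rpath n) :
  maximal_path o w -> maximal_path o w' -> w <> w' ->
  subpath o p w -> subpath o p w' -> exists y, [/\ p = triv y, endpoint o y w & endpoint o y w'].
Proof.
move=> mw mw' ne [a [b [ca [cb ew]]]] [a' [b' [ca' [cb' ew']]]].
case: p ca cb ew ca' cb' ew' => y [|c s] ca cb ew ca' cb' ew'; last first.
  case: ne; apply: (maximal_path_arrow_eq (L1 := b.2) (L2 := b'.2) (R1 := s ++ a.2)
                      (R2 := s ++ a'.2) mw mw'); by rewrite ?ew ?ew' /= -catA.
exists y.
have inner (u : rpath n) cin cout : maximal_path o u -> tgt cin = y -> src cout = y ->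
    ~ endpoint o y u.
  by move=> mu hin hout /(endpoint_srcsink mu) [/(_ cin)|/(_ cout)]; rewrite ?hin ?hout eqxx.
case: (triv_subpath_cases ca cb ew) => [e1|[L [cin [cout [R [e1 i1 o1]]]]]];
  case: (triv_subpath_cases ca' cb' ew') => [e2|[L' [cin' [cout' [R' [e2 i2 o2]]]]]].
- by [].
- by case: (inner _ _ _ mw i2 o2 e1).
- by case: (inner _ _ _ mw' i1 o1 e2).
- have ecin : cin = cin'.
    by apply: (next_arrow_injective (c := cout)); rewrite /next_arrow ?i1 ?i2 o1 eqxx.
  by case: ne; subst cin'; exact: maximal_path_arrow_eq mw mw' e1 e2.
Qed.

Lemma size_maximal_paths (V : seq (rpath n)) (E : seq 'I_n) : uniq V -> uniq E ->
  (forall w, maximal_path o w <-> w \in V) -> (forall x, srcsink o x <-> x \in E) ->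
  size V = size E.
Proof.
move=> uV uE memV memE.
pose ep x (w : rpath n) := (pstart w == x) || (pend o w == x).
have epP x w : reflect (endpoint o x w) (ep x w).
  by apply: (iffP orP) => [] [] /eqP; by [left | right].
have deg_path w : w \in V -> count (ep^~ w) E = 2.
  move=> /memV mw; have /maximal_pathP [_ sr sk] := mw.
  apply: (count_eq2 (x1 := pstart w) (x2 := pend o w)) => //.
  - by apply/memE; left.
  - by apply/memE; right.
  - by apply/eqP => e; apply: (source_not_sink sr); rewrite e.
  - by rewrite /ep eqxx.
  - by rewrite /ep eqxx orbT.
  - move=> a b c _ _ _; rewrite /ep => /orP [] /eqP <- /orP [] /eqP <- /orP [] /eqP <-;
      first [by constructor 1 | by constructor 2 | by constructor 3].
have deg_vertex x : x \in E -> count (ep x) V = 2.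
  move=> /memE /srcsink_two_maximal_paths [w1 [w2 [m1 m2 ne e1 e2]]].
  apply: (count_eq2 (x1 := w1) (x2 := w2)) => //; try exact/memV; try exact/epP.
  - exact/eqP.
  - move=> a b c /memV ma /memV mb /memV mc /epP ea /epP eb /epP ec.
    exact: (maximal_path_endpoint_three ma mb mc ea eb ec).
have count_sum (T : Type) (P : pred T) s : count P s = \sum_(x <- s) P x.
  by rewrite -sum1_count big_mkcond.
have : \sum_(w <- V) count (ep^~ w) E = \sum_(x <- E) count (ep x) V.
  under eq_bigr do rewrite count_sum.
  by rewrite exchange_big; apply: eq_bigr => x _; rewrite count_sum.
rewrite big_seq (eq_bigr (fun=> 2)) -?big_seq; last exact: deg_path.
rewrite [RHS]big_seq [RHS](eq_bigr (fun=> 2)) -?big_seq; last exact: deg_vertex.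
by rewrite !big_const_seq !count_predT !iter_addn_0 => /eqP; rewrite eqn_pmul2l // => /eqP.
Qed.

End Cycle.

Section PathAlgebra.
Variables (n : nat) (o : 'I_n -> bool) (k : fieldType).
Hypothesis acyc : acyclic o.
Local Notation elt := (elt n k).
Local Notation delta := (delta k).

Definition lincomb (s : seq (k * rpath n)) : elt :=
  fun q => (\sum_(cp <- s) cp.1 * delta cp.2 q)%R.

Lemma kmul_delta (a b q : rpath n) :
  kmul o (delta a) (delta b) q = ((pend o b == pstart a) && (q == pcat a b))%:R%R.
Proof.
rewrite /kmul /delta.
have split_at (i : 'I_(size q.2).+1) :
    ((pend o (q.1, take i q.2), drop i q.2) == a) && ((q.1, take i q.2) == b) ->
    [/\ pend o b == pstart a, q == pcat a b & (i : nat) == size b.2].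
  move=> /andP [/eqP <- /eqP <-]; rewrite /pcat /= cat_take_drop -surjective_pairing !eqxx.
  by rewrite size_take; case: ltnP => //= h; rewrite eqn_leq h -ltnS ltn_ord.
have term0 (i : 'I_(size q.2).+1) : ~~ ((pend o b == pstart a) && (q == pcat a b) &&
    ((i : nat) == size b.2)) ->
    (((pend o (q.1, take i q.2), drop i q.2) == a)%:R * ((q.1, take i q.2) == b)%:R = 0 :> k)%R.
  move=> h; case: eqP => h1; case: eqP => h2; rewrite ?mulr0 ?mul0r //.
  by case/negP: h; have [-> -> ->] := split_at i (introT andP (conj (introT eqP h1) (introT eqP h2))).
case: (boolP ((pend o b == pstart a) && (q == pcat a b))) => [/andP [/eqP e1 /eqP e2]|H].
  have hi : size b.2 < (size q.2).+1 by rewrite e2 /= size_cat ltnS leq_addr.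
  rewrite (bigD1 (Ordinal hi)) //= big1 ?addr0 => [|i ne]; last first.
    by apply: term0; rewrite -val_eqE /= in ne; rewrite (negbTE ne) andbF.
  rewrite e2 /= take_size_cat // drop_size_cat // -!surjective_pairing e1 /pstart.
  by rewrite -surjective_pairing !eqxx mulr1.
by rewrite big1 // => i _; apply: term0; rewrite (negbTE H).
Qed.

Lemma kmul_delta_pcat (a b : rpath n) : pend o b = pstart a ->
  kmul o (delta a) (delta b) = delta (pcat a b).
Proof. by move=> e; apply: functional_extensionality => q; rewrite kmul_delta e eqxx. Qed.
Lemma kmul_lincombl s g q :
  kmul o (lincomb s) g q = (\sum_(cp <- s) cp.1 * kmul o (delta cp.2) g q)%R.
Proof.
rewrite /kmul /lincomb.
under eq_bigr do rewrite mulr_suml.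
rewrite exchange_big /=; apply: eq_bigr => cp _.
rewrite mulr_sumr; apply: eq_bigr => i _; by rewrite mulrA.
Qed.

Lemma kmul_lincombr f s q :
  kmul o f (lincomb s) q = (\sum_(cp <- s) cp.1 * kmul o f (delta cp.2) q)%R.
Proof.
rewrite /kmul /lincomb.
under eq_bigr do rewrite mulr_sumr.
rewrite exchange_big /=; apply: eq_bigr => cp _.
rewrite mulr_sumr; apply: eq_bigr => i _; by rewrite mulrCA.
Qed.

Definition mul_terms (s t : seq (k * rpath n)) : seq (k * rpath n) :=
  flatten [seq [seq ((a.1 * b.1)%R, pcat a.2 b.2) | b <- t & pend o b.2 == pstart a.2]
          | a <- s].

Lemma kmul_lincomb (s t : seq (k * rpath n)) :
  kmul o (lincomb s) (lincomb t) = lincomb (mul_terms s t).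
Proof.
apply: functional_extensionality => q.
rewrite kmul_lincombl /lincomb /mul_terms big_flatten /= big_map.
apply: eq_bigr => a _; rewrite kmul_lincombr mulr_sumr big_map big_filter [RHS]big_mkcond /=.
apply: eq_bigr => b _; rewrite kmul_delta.
by case: (pend o b.2 == pstart a.2); rewrite /= ?mulrA ?mulr0.
Qed.

Lemma mem_mul_terms s t cp : cp \in mul_terms s t ->
  exists a b, [/\ a \in s, b \in t, pend o b.2 = pstart a.2
                 & cp = ((a.1 * b.1)%R, pcat a.2 b.2)].
Proof.
rewrite /mul_terms => /flattenP [l /mapP [a ha ->]] /mapP [b].
by rewrite mem_filter => /andP [/eqP e hb] ->; exists a, b.
Qed.

Lemma lincomb_nil : lincomb [::] = @zero_elt n k.
Proof. by apply: functional_extensionality => q; rewrite /lincomb big_nil. Qed.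

Lemma lincomb_cons (cp : k * rpath n) s :
  lincomb (cp :: s) = (fun q => cp.1 * delta cp.2 q + lincomb s q)%R.
Proof. by apply: functional_extensionality => q; rewrite /lincomb big_cons. Qed.

Lemma lincomb_cat s t : lincomb (s ++ t) = (fun q => lincomb s q + lincomb t q)%R.
Proof. by apply: functional_extensionality => q; rewrite /lincomb big_cat. Qed.

Lemma lincomb_scale (c : k) s :
  lincomb [seq ((c * cp.1)%R, cp.2) | cp <- s] = (fun q => c * lincomb s q)%R.
Proof.
apply: functional_extensionality => q; rewrite /lincomb big_map mulr_sumr.
by apply: eq_bigr => cp _; rewrite mulrA.
Qed.

Lemma lincomb_delta p : lincomb [:: (1%R, p)] = delta p.
Proof.
by apply: functional_extensionality => q; rewrite /lincomb big_cons big_nil mul1r addr0.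
Qed.

Lemma lincomb_support s q : lincomb s q != 0%R -> exists cp, cp \in s /\ cp.2 = q.
Proof.
move=> h; apply: NNPP => H; move/eqP: h; apply.
rewrite /lincomb big_seq big1 // => cp hcp.
rewrite /delta; case: eqP => [e|]; last by rewrite mulr0.
by exfalso; apply: H; exists cp.
Qed.

Lemma in_span_support (Y : rpath n -> Prop) (f : elt) q : in_span Y f -> f q != 0%R -> Y q.
Proof.
move=> [s [hs ->]] h; have [cp [hcp <-]] := lincomb_support h; exact: hs.
Qed.

Lemma in_span_delta (Y : rpath n -> Prop) p : Y p -> @in_span n k Y (delta p).
Proof.
by exists [:: (1%R, p)]; split; [move=> cp; rewrite inE => /eqP -> | rewrite -lincomb_delta].
Qed.

Lemma in_span_add (Y : rpath n -> Prop) (f g : elt) :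
  in_span Y f -> in_span Y g -> in_span Y (fun q => f q + g q)%R.
Proof.
move=> [s [hs ->]] [t [ht ->]]; exists (s ++ t); split; last by rewrite -lincomb_cat.
by move=> cp; rewrite mem_cat => /orP [/hs|/ht].
Qed.

Lemma in_span_scale (Y : rpath n -> Prop) (c : k) (f : elt) :
  in_span Y f -> in_span Y (fun q => c * f q)%R.
Proof.
move=> [s [hs ->]]; exists [seq ((c * cp.1)%R, cp.2) | cp <- s].
by split; [move=> _ /mapP [cp h ->]; exact: hs h | rewrite -lincomb_scale].
Qed.

Lemma in_span0 (Y : rpath n -> Prop) : @in_span n k Y (@zero_elt n k).
Proof. by exists [::]; split=> //; symmetry; exact: lincomb_nil. Qed.

Lemma in_span_sub (Y Y' : rpath n -> Prop) (f : elt) :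
  (forall p, Y p -> Y' p) -> in_span Y f -> in_span Y' f.
Proof. by move=> h [s [hs ->]]; exists s; split => // cp /hs /h. Qed.

Lemma delta_neq0 p : delta p <> @zero_elt n k.
Proof. by move/(congr1 (fun f => f p)) => /eqP; rewrite /delta /zero_elt eqxx oner_eq0. Qed.

Lemma elt_neq0 (f : elt) : f <> @zero_elt n k -> exists q, f q != 0%R.
Proof.
move=> h; apply: NNPP => H; apply: h; apply: functional_extensionality => q.
by apply/eqP; apply: NNPP => h'; apply: H; exists q; apply/negP.
Qed.

Lemma linearized_lincomb (I : elt -> Prop) : linearized_semigroup_ideal o I ->
  forall f, I f -> exists s, (forall cp, cp \in s -> I (delta cp.2)) /\ f = lincomb s.
Proof.
move=> [_ [X [_ [_ hX]]]] f /hX [s [hs ->]]; exists s; split => // cp /hs h.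
by apply/hX; apply: in_span_delta.
Qed.

Lemma delta_in_kQ p : pvalid o p -> in_kQ o (delta p).
Proof. by move=> v q nq; rewrite /delta; case: eqP => // e; move: nq; rewrite e v. Qed.

Fixpoint short_seqs (m : nat) : seq (seq 'I_n) :=
  if m is m'.+1 then [::] :: [seq a :: s | a <- enum 'I_n, s <- short_seqs m'] else [:: [::]].

Lemma mem_short_seqs m s : size s <= m -> s \in short_seqs m.
Proof.
elim: m s => [|m IH] [|a s] //= h; rewrite inE /=.
by apply/allpairsP; exists (a, s); rewrite mem_enum IH.
Qed.

Definition valid_paths : seq (rpath n) :=
  [seq p <- undup [seq (x, s) | x <- enum 'I_n, s <- short_seqs n] | pvalid o p].

Lemma uniq_valid_paths : uniq valid_paths.
Proof. by rewrite filter_uniq // undup_uniq. Qed.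

Lemma mem_valid_paths p : pvalid o p -> p \in valid_paths.
Proof.
move=> v; rewrite mem_filter v mem_undup /=; case: p v => x s v.
apply/allpairsP; exists (x, s); rewrite mem_enum mem_short_seqs //.
exact: ltnW (pvalid_size acyc v).
Qed.

Lemma kQ_lincomb (f : elt) : in_kQ o f -> f = lincomb [seq (f p, p) | p <- valid_paths].
Proof.
move=> hf; apply: functional_extensionality => q; rewrite /lincomb big_map.
case: (boolP (pvalid o q)) => vq.
  rewrite (bigD1_seq q) ?uniq_valid_paths ?mem_valid_paths //= /delta eqxx mulr1.
  by rewrite big1_seq ?addr0 // => p /andP [ne _]; rewrite eq_sym (negbTE ne) mulr0.
rewrite hf // big1_seq // => p /andP [_]; rewrite mem_filter => /andP [vp _].
by rewrite /delta; case: eqP => [e|]; [move: vq; rewrite e vp | rewrite mulr0].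
Qed.

Definition ext_closed (Y : rpath n -> Prop) :=
  forall w al be, Y w -> composable o al w -> composable o w be -> Y (pcat al (pcat w be)).

Lemma ext_closed_pcatl (Y : rpath n -> Prop) (p q : rpath n) :
  ext_closed Y -> Y q -> pvalid o q -> pvalid o p -> pend o q = pstart p -> Y (pcat p q).
Proof.
by move=> cY yq vq vp e; rewrite -(pcat_triv_r q); apply: cY => //; split.
Qed.

Lemma ext_closed_pcatr (Y : rpath n -> Prop) (p q : rpath n) :
  ext_closed Y -> Y p -> pvalid o p -> pvalid o q -> pend o q = pstart p -> Y (pcat p q).
Proof.
by move=> cY yp vp vq e; rewrite -[pcat p q](pcat_triv_l (pend o p)) //; apply: cY => //; split.
Qed.

Lemma in_span_ideal (Y : rpath n -> Prop) :
  (forall p, Y p -> pvalid o p) -> ext_closed Y -> is_ideal o (@in_span n k Y).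
Proof.
move=> vY cY.
have vall p : p \in valid_paths -> pvalid o p by rewrite mem_filter => /andP [].
split.
  by move=> f hf q nq; apply: contraNeq nq => /(in_span_support hf)/vY.
split; first exact: in_span0.
split; first by move=> f g; apply: in_span_add.
split; first by move=> c f; apply: in_span_scale.
split=> [f g hf [t [ht ->]] | f g [s [hs ->]] hg].
- rewrite (kQ_lincomb hf) kmul_lincomb; eexists; split=> //.
  move=> _ /mem_mul_terms [_ [b [/mapP [p hp ->] hb e ->]]] /=.
  exact: ext_closed_pcatl (ht _ hb) (vY _ (ht _ hb)) (vall _ hp) e.
- rewrite (kQ_lincomb hg) kmul_lincomb; eexists; split=> //.
  move=> _ /mem_mul_terms [a [_ [ha /mapP [p hp ->] e ->]]] /=.
  exact: ext_closed_pcatr (hs _ ha) (vY _ (hs _ ha)) (vall _ hp) e.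
Qed.

Lemma kmul_delta_l (a r : rpath n) f : pend o r = pstart a ->
  kmul o (delta a) f (pcat a r) = f r.
Proof.
move=> e; rewrite /kmul /=.
have hi : size r.2 < (size (r.2 ++ a.2)).+1 by rewrite size_cat ltnS leq_addr.
rewrite (bigD1 (Ordinal hi)) //= big1 => [|i ne].
  rewrite take_size_cat // drop_size_cat // -surjective_pairing e /pstart.
  by rewrite -surjective_pairing /delta eqxx mul1r addr0.
rewrite /delta; case: eqP => [/(congr1 (fun p : rpath n => size p.2))|]; last by rewrite mul0r.
rewrite /= size_drop => h; case/eqP: ne; apply: val_inj => /=.
by have := size_cat r.2 a.2; have := ltn_ord i; lia.
Qed.

Lemma kmul_delta_r (b r : rpath n) f : pend o b = pstart r ->
  kmul o f (delta b) (pcat r b) = f r.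
Proof.
move=> e; rewrite /kmul /=.
have hi : size b.2 < (size (b.2 ++ r.2)).+1 by rewrite size_cat ltnS leq_addr.
rewrite (bigD1 (Ordinal hi)) //= big1 => [|i ne].
  rewrite take_size_cat // drop_size_cat // -surjective_pairing -[pend o b]/(pend o b) e.
  by rewrite /pstart -surjective_pairing /delta eqxx mulr1 addr0.
rewrite /delta; case: eqP => [/(congr1 (fun p : rpath n => size p.2))|]; last by rewrite mulr0.
rewrite /= size_take => h; case/eqP: ne; apply: val_inj => /=.
by have := size_cat b.2 r.2; have := ltn_ord i; move: h; case: ltnP; lia.
Qed.

Lemma in_span_sum (Y : rpath n -> Prop) m (h : 'I_m -> elt) :
  (forall i, in_span Y (h i)) -> in_span Y (fun p => \sum_(i < m) h i p)%R.
Proof.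
elim: m h => [|m IH] h hh.
  have -> : (fun p => \sum_(i < 0) h i p)%R = @zero_elt n k.
    by apply: functional_extensionality => p; rewrite big_ord0.
  exact: in_span0.
have -> : (fun p => \sum_(i < m.+1) h i p)%R =
    (fun p => \sum_(i < m) h (widen_ord (leqnSn m) i) p + h ord_max p)%R.
  by apply: functional_extensionality => p; rewrite big_ord_recr.
by apply: in_span_add; first exact: IH.
Qed.

Lemma in_span_split (Y Y1 Y2 : rpath n -> Prop) (g : elt) :
  (forall p, Y p -> Y1 p \/ Y2 p) -> in_span Y g ->
  exists a b, [/\ in_span Y1 a, in_span Y2 b & g = (fun p => a p + b p)%R].
Proof.
move=> cover [s [hs ->]]; elim: s hs => [|cp s IH] hs.
  exists (@zero_elt n k), (@zero_elt n k); split; try exact: in_span0.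
  by apply: functional_extensionality => q; rewrite big_nil /zero_elt addr0.
have [|a [b [ha hb eab]]] := IH; first by move=> cp' h; apply: hs; rewrite inE h orbT.
have ecp q : (\sum_(cp <- cp :: s) cp.1 * delta cp.2 q = cp.1 * delta cp.2 q + (a q + b q))%R.
  by rewrite big_cons (congr1 (fun f => f q) eab).
have hcp : in_span Y1 (fun q => cp.1 * delta cp.2 q)%R \/
           in_span Y2 (fun q => cp.1 * delta cp.2 q)%R.
  by case: (cover _ (hs _ (mem_head _ _))) => h; [left | right]; apply/in_span_scale/in_span_delta.
case: hcp => h.
  exists (fun q => cp.1 * delta cp.2 q + a q)%R, b; split=> //; first exact: in_span_add.
  by apply: functional_extensionality => q; rewrite ecp addrA.
exists a, (fun q => cp.1 * delta cp.2 q + b q)%R; split=> //; first exact: in_span_add.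
by apply: functional_extensionality => q; rewrite ecp addrCA.
Qed.

Section Ideal.
Variable C : elt -> Prop.
Hypothesis idealC : is_ideal o C.

Lemma ideal_kQ f : C f -> in_kQ o f.
Proof. by case: idealC => kq _; exact: kq. Qed.

Lemma ideal0 : C (@zero_elt n k).
Proof. by case: idealC => _ []. Qed.

Lemma ideal_add f g : C f -> C g -> C (fun q => f q + g q)%R.
Proof. by case: idealC => _ [_ [ad _]]; exact: ad. Qed.

Lemma ideal_scale c f : C f -> C (fun q => c * f q)%R.
Proof. by case: idealC => _ [_ [_ [sc _]]]; exact: sc. Qed.

Lemma ideal_mull f g : in_kQ o f -> C g -> C (kmul o f g).
Proof. by case: idealC => _ [_ [_ [_ [ml _]]]]; exact: ml. Qed.

Lemma ideal_mulr f g : C f -> in_kQ o g -> C (kmul o f g).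
Proof. by case: idealC => _ [_ [_ [_ [_ mr]]]]; exact: mr. Qed.

Lemma ideal_lincomb s : (forall cp, cp \in s -> C (delta cp.2)) -> C (lincomb s).
Proof.
elim: s => [|cp s IH] h; first by rewrite lincomb_nil; exact: ideal0.
rewrite lincomb_cons; apply: ideal_add; first by apply/ideal_scale/h; rewrite inE eqxx.
by apply: IH => cp' h'; apply: h; rewrite inE h' orbT.
Qed.

Lemma ideal_pvalid p : C (delta p) -> pvalid o p.
Proof.
move=> h; apply: contraT => nv; have := ideal_kQ h nv.
by rewrite /delta eqxx => /eqP; rewrite oner_eq0.
Qed.

Lemma ideal_delta_subpath p w : C (delta p) -> subpath o p w -> C (delta w).
Proof.
move=> hp [a [b [[va [_ ea]] [[_ [vb eb]] ->]]]].
rewrite -kmul_delta_pcat ?pend_pcat // -kmul_delta_pcat //.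
by apply: ideal_mull; [exact: delta_in_kQ | apply: ideal_mulr => //; exact: delta_in_kQ].
Qed.

Lemma ideal_delta_of_support g t : C g -> g <> @zero_elt n k ->
  (forall q, g q != 0%R -> q = t) -> C (delta t).
Proof.
move=> hg nz supp; have [q gq] := elt_neq0 nz; move: (gq); rewrite (supp _ gq) => gt.
have -> : delta t = (fun q => (g t)^-1 * g q)%R.
  apply: functional_extensionality => r; rewrite /delta.
  case: (eqVneq r t) => [->|ne]; first by rewrite mulVf.
  by case: (eqVneq (g r) 0%R) => [->|/supp e]; [rewrite mulr0 | rewrite e eqxx in ne].
exact: ideal_scale.
Qed.

End Ideal.

Lemma summand_l (P A B : elt -> Prop) : is_ideal o B ->
  (forall f, P f <-> exists a b, A a /\ B b /\ f = (fun p => a p + b p)%R) ->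
  forall g, A g -> P g.
Proof.
move=> idealB sumAB g ha; apply/sumAB; exists g, (@zero_elt n k); do !split=> //.
  exact: ideal0.
by apply: functional_extensionality => p; rewrite /zero_elt addr0.
Qed.

Lemma summand_r (P A B : elt -> Prop) : is_ideal o A ->
  (forall f, P f <-> exists a b, A a /\ B b /\ f = (fun p => a p + b p)%R) ->
  forall g, B g -> P g.
Proof.
move=> idealA sumAB g hb; apply/sumAB; exists (@zero_elt n k), g; do !split=> //.
  exact: ideal0.
by apply: functional_extensionality => p; rewrite /zero_elt add0r.
Qed.

Section Span.
Variable Y : rpath n -> Prop.
Hypotheses (validY : forall p, Y p -> pvalid o p) (closedY : ext_closed Y).

Lemma ideal_maximal_element (C : elt -> Prop) f :
  is_ideal o C -> (forall g, C g -> in_span Y g) -> C f -> f <> @zero_elt n k ->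
  exists g, [/\ C g, g <> @zero_elt n k & in_span (fun r => Y r /\ maximal_path o r) g].
Proof.
move=> idealC subC hf nz; have [q hq] := elt_neq0 nz.
have vq : pvalid o q by apply: contraT => nv; rewrite (ideal_kQ idealC hf nv) eqxx in hq.
have [a [b [[va [_ ea]] [_ [vb eb]] mw]]] := extend_to_maximal acyc vq.
have [s [hs ef]] := subC _ hf.
exists (kmul o (delta a) (kmul o f (delta b))); split.
- exact: ideal_mull (delta_in_kQ va) (ideal_mulr idealC hf (delta_in_kQ vb)).
- move/(congr1 (fun g => g (pcat a (pcat q b)))) => /=.
  by rewrite kmul_delta_l ?pend_pcat // kmul_delta_r // => /eqP; rewrite (negbTE hq).
have -> : f = lincomb s := ef.
rewrite -(lincomb_delta a) -(lincomb_delta b) !kmul_lincomb; eexists; split=> //.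
move=> _ /mem_mul_terms [_ [_ [/[!inE]/eqP-> /mem_mul_terms [p [_ [hp /[!inE]/eqP-> e2 ->]]] e1 ->]]] /=.
have vp := validY (hs _ hp); move: e1 => /= e1; have e1' : pend o p.2 = pstart a by rewrite -e1 pend_pcat.
split; first by apply: closedY (hs _ hp) _ _; split.
apply/maximal_pathP; split.
- by rewrite !pvalid_pcat ?pend_pcat // vb vp va.
- exact: maximal_path_source mw.
- by move: (maximal_path_sink mw); rewrite !pend_pcat ?pend_pcat.
Qed.

Lemma ideal_meets_maximal (C C' : elt -> Prop) :
  is_ideal o C -> is_ideal o C' -> (forall g, C' g -> in_span Y g) ->
  (forall r, Y r -> maximal_path o r -> C (delta r)) -> nonzero_ideal C' ->
  exists g, [/\ C g, C' g & g <> @zero_elt n k].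
Proof.
move=> idealC idealC' subC' maxC [f [hf nz]].
have [g [hg gnz [s [hs eg]]]] := ideal_maximal_element idealC' subC' hf nz.
exists g; split=> //; have -> : g = lincomb s := eg.
by apply: ideal_lincomb => // cp /hs [yr mr]; exact: maxC.
Qed.

Lemma delta_triv_summand (A B : elt -> Prop) x :
  is_ideal o A -> is_ideal o B ->
  (forall f, in_span Y f <-> exists a b, A a /\ B b /\ f = (fun p => a p + b p)%R) ->
  Y (triv x) -> A (delta (triv x)) \/ B (delta (triv x)).
Proof.
move=> idealA idealB sumAB yx.
pose cut c := kmul o (delta (triv x)) (kmul o c (delta (triv x))).
have cut_x c : cut c (triv x) = c (triv x).
  by rewrite /cut (kmul_delta_l (a := triv x) (r := triv x)) // (kmul_delta_r (b := triv x) (r := triv x)).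
have cut_supp c : in_span Y c -> forall q, cut c q != 0%R -> q = triv x.
  move=> [s [hs ->]] q; rewrite /cut -(lincomb_delta (triv x)) -[fun q => _]/(lincomb s).
  rewrite !kmul_lincomb => /lincomb_support [cp [/mem_mul_terms [a [b [ha hb e1 ->]]] <-]].
  move: ha hb e1; rewrite inE => /eqP-> /mem_mul_terms [p [d [hp hd e2 ->]]].
  move: hd e2; rewrite inE => /eqP-> /= e2 e1.
  by rewrite (pvalid_loop acyc (validY (hs _ hp))) // -(pend_pcat e2) e1.
have ideal_cut C c : is_ideal o C -> C c -> C (cut c).
  move=> idealC hc; have kx : in_kQ o (delta (triv x)) by exact: delta_in_kQ.
  by rewrite /cut; apply: (ideal_mull idealC) => //; apply: (ideal_mulr idealC).
have [a [b [ha [hb eab]]]] := (sumAB _).1 (in_span_delta yx).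
have ab1 : (a (triv x) + b (triv x) = 1)%R by rewrite -[LHS]/((fun p => a p + b p)%R (triv x)) -eab /delta eqxx.
have nz c : c (triv x) != 0%R -> cut c <> @zero_elt n k.
  by move=> cx /(congr1 (fun g => g (triv x))) /eqP; rewrite cut_x (negbTE cx).
case: (eqVneq (a (triv x)) 0%R) => a0.
- right; apply: (ideal_delta_of_support idealB (ideal_cut _ _ idealB hb)).
    by apply: nz; move: ab1; rewrite a0 add0r => ->; exact: oner_neq0.
  by apply: cut_supp; exact: (summand_r idealA sumAB hb).
- left; apply: (ideal_delta_of_support idealA (ideal_cut _ _ idealA ha)).
    exact: nz.
  by apply: cut_supp; exact: (summand_l idealB sumAB ha).
Qed.

Lemma in_span_decomposes (P : elt -> Prop) (Y1 Y2 : rpath n -> Prop) :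
  (forall f, P f <-> in_span Y f) ->
  (forall p, Y1 p -> Y p) -> (forall p, Y2 p -> Y p) -> ext_closed Y1 -> ext_closed Y2 ->
  (forall p, Y p -> Y1 p \/ Y2 p) -> (forall p, Y1 p -> Y2 p -> False) ->
  (exists p, Y1 p) -> (exists p, Y2 p) -> decomposes o P.
Proof.
move=> spanP sub1 sub2 closed1 closed2 cover disj [p1 y1] [p2 y2].
exists (@in_span n k Y1), (@in_span n k Y2); split.
  by apply: in_span_ideal => // p /sub1 /validY.
split; first by apply: in_span_ideal => // p /sub2 /validY.
split; first by exists (delta p1); split; [exact: in_span_delta | exact: delta_neq0].
split; first by exists (delta p2); split; [exact: in_span_delta | exact: delta_neq0].
split.
  move=> g g1 g2; apply: NNPP => /elt_neq0 [q gq].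
  exact: disj (in_span_support g1 gq) (in_span_support g2 gq).
move=> g; rewrite spanP; split=> [/(in_span_split cover) [a [b [ha hb ->]]] | [a [b [ha [hb ->]]]]].
  by exists a, b.
by apply: in_span_add; apply: in_span_sub; [exact: sub1 | exact: ha | exact: sub2 | exact: hb].
Qed.

End Span.

End PathAlgebra.

Section Runs.
Variables (W F : pred nat) (N : nat).
Hypothesis F_W : forall l, F l -> W l && W l.+1.

Definition run_start i := W i && ((i == 0) || ~~ F i.-1).

Lemma count_run_start :
  count run_start (iota 0 N.+1) + count F (iota 0 N) = count W (iota 0 N.+1).
Proof.
have -> : count F (iota 0 N) = count (fun i => W i && ~~ run_start i) (iota 0 N.+1).
  rewrite /= /run_start eqxx andbT andbN add0n -[1]/(1 + 0) iotaDl count_map.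
  apply: eq_count => l; rewrite /= add1n /=.
  by case: (boolP (F l)) => [/F_W/andP [_ ->] | _]; rewrite ?andbT ?andbN.
elim: (iota 0 N.+1) => //= i s <-; rewrite /run_start.
by case: (W i); case: (_ || _) => /=; lia.
Qed.

Lemma run_start_le i : W i -> exists s, [/\ run_start s, s <= i & forall l, s <= l < i -> F l].
Proof.
elim: i => [|i IH] wi; first by exists 0; rewrite /run_start wi.
case: (boolP (F i)) => [fi | nfi]; last first.
  by exists i.+1; split=> //; [rewrite /run_start wi nfi orbT | lia].
have [s [ss si fs]] := IH (proj1 (andP (F_W fi))).
exists s; split=> //; first lia.
by move=> l /andP [sl li]; case: (ltngtP l i) => [lt|gt|->] //; [apply: fs; lia | lia].
Qed.

Lemma run_of_other_start i j m : (forall s, run_start s -> s = i \/ s = j) -> ~~ F j ->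
  W m -> m != j -> i <= m /\ forall l, i <= l < m -> F l.
Proof.
move=> starts nFj wm mj; have [s [st sm Fs]] := run_start_le wm.
case: (starts s st) => es; subst s; first by [].
have jm : j < m by rewrite ltn_neqAle eq_sym mj.
by case/negP: nFj; apply: Fs; rewrite leqnn.
Qed.

End Runs.

Section ProductIdeal.
Variables (n : nat) (o : 'I_n -> bool) (k : fieldType) (I J : elt n k -> Prop).
Hypotheses (idealI : is_ideal o I) (idealJ : is_ideal o J).
Local Notation delta := (delta k).

Definition prod_path (p : rpath n) : Prop :=
  exists al be, composable o al be /\ I (delta al) /\ J (delta be) /\ p = pcat al be.

Lemma prod_path_I p : prod_path p -> I (delta p).
Proof.
move=> [al [be [[va [vb e]] [hI [hJ ->]]]]]; rewrite -(kmul_delta_pcat k e).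
exact: (ideal_mulr idealI hI (delta_in_kQ k vb)).
Qed.

Lemma prod_path_J p : prod_path p -> J (delta p).
Proof.
move=> [al [be [[va [vb e]] [hI [hJ ->]]]]]; rewrite -(kmul_delta_pcat k e).
exact: (ideal_mull idealJ (delta_in_kQ k va) hJ).
Qed.

Lemma prod_path_valid p : prod_path p -> pvalid o p.
Proof. by move/prod_path_I; exact: ideal_pvalid. Qed.

Lemma prod_path_ext_closed : ext_closed o prod_path.
Proof.
move=> w a b [al [be [[va [vb e]] [hI [hJ ->]]]]] [vA [_ ea]] [_ [vB eb]].
have ea' : pend o al = pstart a by rewrite -(pend_pcat e).
exists (pcat a al), (pcat be b); split; last split; last split.
- by rewrite /composable !pvalid_pcat ?pend_pcat // va vA vB vb.
- apply: (ideal_delta_subpath idealI hI); exists a, (triv (pstart al)).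
  by rewrite pcat_triv_r; do !split.
- apply: (ideal_delta_subpath idealJ hJ); exists (triv (pend o be)), b.
  by rewrite pcat_triv_l; do !split.
- by rewrite !pcatA.
Qed.

Lemma prod_path_subpath p w : prod_path p -> subpath o p w -> prod_path w.
Proof. by move=> hp [a [b [ca [cb ->]]]]; apply: prod_path_ext_closed. Qed.

Lemma iprod_add f g : iprod o I J f -> iprod o I J g -> iprod o I J (fun p => f p + g p)%R.
Proof.
move=> [m1 [F1 [G1 [h1 ->]]]] [m2 [F2 [G2 [h2 ->]]]].
pose pick (X : Type) (X1 : 'I_m1 -> X) (X2 : 'I_m2 -> X) (i : 'I_(m1 + m2)) :=
  match split i with inl j => X1 j | inr j => X2 j end.
exists (m1 + m2), (pick _ F1 F2), (pick _ G1 G2); split.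
  by move=> i; rewrite /pick; case: (split i).
apply: functional_extensionality => p; rewrite big_split_ord /pick.
congr (_ + _)%R; apply: eq_bigr => i _.
  by rewrite (unsplitK (inl i : 'I_m1 + 'I_m2)).
by rewrite (unsplitK (inr i : 'I_m1 + 'I_m2)).
Qed.

Lemma iprod_in_span f :
  linearized_semigroup_ideal o I -> linearized_semigroup_ideal o J ->
  iprod o I J f <-> in_span prod_path f.
Proof.
move=> linI linJ; split=> [[m [F [G [h ->]]]] | [s [hs ->]]].
  apply: in_span_sum => i; have [hF hG] := h i.
  have [s [hs ->]] := linearized_lincomb linI hF.
  have [t [ht ->]] := linearized_lincomb linJ hG.
  rewrite kmul_lincomb; exists (mul_terms o s t); split=> // _ /mem_mul_terms [a [b [ha hb e ->]]].
  have [va vb] := (ideal_pvalid idealI (hs _ ha), ideal_pvalid idealJ (ht _ hb)).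
  by exists a.2, b.2; do !split=> //; [exact: hs | exact: ht].
elim: s hs => [|cp s IH] hs.
  exists 0, (fun _ => @zero_elt n k), (fun _ => @zero_elt n k); split; first by case.
  by apply: functional_extensionality => p; rewrite big_ord0 big_nil.
have -> : (fun p => \sum_(cp <- cp :: s) cp.1 * delta cp.2 p)%R =
    (fun p => cp.1 * delta cp.2 p + \sum_(cp <- s) cp.1 * delta cp.2 p)%R.
  by apply: functional_extensionality => p; rewrite big_cons.
apply: iprod_add; last by apply: IH => cp' h; apply: hs; rewrite inE h orbT.
have [al [be [[va [vb e]] [hI [hJ ->]]]]] := hs _ (mem_head _ _).
exists 1, (fun _ => fun q => cp.1 * delta al q)%R, (fun _ => delta be); split=> //.
  by move=> _; split=> //; exact: (ideal_scale idealI).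
apply: functional_extensionality => p; rewrite big_ord1 -(kmul_delta_pcat k e).
by rewrite /kmul mulr_sumr; apply: eq_bigr => i _; rewrite mulrA.
Qed.

Lemma prod_path_endpoint w x : pvalid o w ->
  I (delta w) -> J (delta w) -> I (delta (triv x)) -> J (delta (triv x)) ->
  endpoint o x w -> prod_path w.
Proof.
move=> vw hIw hJw hIx hJx [e|e]; subst x.
  by exists w, (triv (pstart w)); rewrite pcat_triv_r; do !split.
by exists (triv (pend o w)), w; rewrite pcat_triv_l; do !split.
Qed.

Lemma prod_path_of_isolated :
  (forall w, GV o I w -> GV o J w ->
     (forall x, GE o I x -> GE o J x -> ~ endpoint o x w) -> prod_path w) ->
  forall w, GV o I w -> GV o J w -> prod_path w.
Proof.
move=> iso w [mw Iw] [_ Jw].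
case: (classic (exists x, [/\ GE o I x, GE o J x & endpoint o x w])) => [[x [[_ Ix] [_ Jx] ex]] | nx].
  exact: prod_path_endpoint (maximal_path_valid mw) Iw Jw Ix Jx ex.
by apply: iso => // x gI gJ ex; apply: nx; exists x.
Qed.

End ProductIdeal.

Section Chain.
Variables (n : nat) (o : 'I_n -> bool) (vs : seq (rpath n)) (es : seq 'I_n).
Hypotheses (n_gt1 : 1 < n) (maximal_vs : forall p, p \in vs -> maximal_path o p).
Hypotheses (uniq_vs : uniq vs) (size_vs : size vs = (size es).+1).
Hypothesis adjacent : forall i x, onth es i = Some x -> exists u v,
  onth vs i = Some u /\ onth vs i.+1 = Some v /\ endpoint o x u /\ endpoint o x v.

Lemma chain_edge_endpoints w0 x0 l : l < size es ->
  [/\ endpoint o (nth x0 es l) (nth w0 vs l), endpoint o (nth x0 es l) (nth w0 vs l.+1)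
    & nth w0 vs l != nth w0 vs l.+1].
Proof.
move=> hl; have [u [v [eu [ev [xu xv]]]]] := adjacent (onth_nth_lt x0 hl).
rewrite (onth_nth w0 _ _ _ eu) (onth_nth w0 _ _ _ ev); split=> //.
rewrite -(onth_nth w0 _ _ _ eu) -(onth_nth w0 _ _ _ ev) nth_uniq ?size_vs ?ltnS ?(ltnW hl) //.
by rewrite neq_ltn ltnSn.
Qed.

Lemma chain_edge_maximal w0 x0 l w : l < size es -> maximal_path o w ->
  endpoint o (nth x0 es l) w -> w = nth w0 vs l \/ w = nth w0 vs l.+1.
Proof.
move=> hl mw ew; have [e1 e2 /eqP ne] := chain_edge_endpoints w0 x0 hl.
have m1 : maximal_path o (nth w0 vs l) by apply/maximal_vs/mem_nth; rewrite size_vs ltnW.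
have m2 : maximal_path o (nth w0 vs l.+1) by apply/maximal_vs/mem_nth; rewrite size_vs.
by case: (maximal_path_endpoint_three n_gt1 mw m1 m2 ew e1 e2) => [->|->|/ne []]; [left | right].
Qed.

Lemma chain_edge_mem x w : x \in es -> maximal_path o w -> endpoint o x w -> w \in vs.
Proof.
move=> xe mw; rewrite -(nth_index x xe) => ew; have hl : index x es < size es by rewrite index_mem.
by case: (chain_edge_maximal w hl mw ew) => ->; apply: mem_nth; rewrite size_vs ltnS // ltnW.
Qed.

End Chain.

Section TwoChains.
Variables (k : fieldType) (n : nat) (o : 'I_n -> bool) (I J : elt n k -> Prop) (x0 : 'I_n).
Hypotheses (n_gt1 : 1 < n) (acyc : acyclic o).
Hypotheses (idealI : is_ideal o I) (idealJ : is_ideal o J).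
Hypotheses (linI : linearized_semigroup_ideal o I) (linJ : linearized_semigroup_ideal o J).
Hypothesis coverV : forall p, maximal_path o p -> GV o I p \/ GV o J p.
Hypothesis coverE : forall x, srcsink o x -> GE o I x \/ GE o J x.
Variables (vsI vsJ : seq (rpath n)) (esI esJ : seq 'I_n).
Hypotheses (uniq_vsI : uniq vsI) (uniq_esI : uniq esI) (size_vsI : size vsI = (size esI).+1).
Hypotheses (memVI : forall p, GV o I p <-> p \in vsI) (memEI : forall x, GE o I x <-> x \in esI).
Hypothesis adjI : forall i x, onth esI i = Some x -> exists u v,
  onth vsI i = Some u /\ onth vsI i.+1 = Some v /\ endpoint o x u /\ endpoint o x v.
Hypotheses (uniq_vsJ : uniq vsJ) (uniq_esJ : uniq esJ) (size_vsJ : size vsJ = (size esJ).+1).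
Hypotheses (memVJ : forall p, GV o J p <-> p \in vsJ) (memEJ : forall x, GE o J x <-> x \in esJ).
Hypothesis adjJ : forall i x, onth esJ i = Some x -> exists u v,
  onth vsJ i = Some u /\ onth vsJ i.+1 = Some v /\ endpoint o x u /\ endpoint o x v.

Local Notation uI m := (nth (triv x0) vsI m).
Local Notation eI l := (nth x0 esI l).

Lemma maximal_vsI p : p \in vsI -> maximal_path o p.
Proof. by case/memVI. Qed.

Lemma maximal_vsJ p : p \in vsJ -> maximal_path o p.
Proof. by case/memVJ. Qed.

Definition common_vertex m := (m < size vsI) && (uI m \in vsJ).
Definition common_edge l := (l < size esI) && (eI l \in esJ).
Local Notation component_start := (run_start common_vertex common_edge).

Lemma common_edge_vertex l : common_edge l -> common_vertex l && common_vertex l.+1.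
Proof.
case/andP=> hl eJ; have [xu xv _] := chain_edge_endpoints uniq_vsI size_vsI adjI (triv x0) x0 hl. 
have inJ := chain_edge_mem n_gt1 maximal_vsJ uniq_vsJ size_vsJ adjJ eJ.
rewrite /common_vertex size_vsI ltnS (ltnW hl) ltnS hl /=.
by apply/andP; split; apply: inJ => //; apply/maximal_vsI/mem_nth; rewrite size_vsI ltnS // ltnW.
Qed.

Lemma count_common_vertex :
  count common_vertex (iota 0 (size esI).+1) = (count common_edge (iota 0 (size esI))).+2.
Proof.
have -> : count common_vertex (iota 0 (size esI).+1) = count (mem vsJ) vsI.
  rewrite -size_vsI -{2}(mkseq_nth (triv x0) vsI) /mkseq count_map.
  by apply: eq_in_count => m; rewrite mem_iota /common_vertex /= => ->.
have -> : count common_edge (iota 0 (size esI)) = count (mem esJ) esI.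
  rewrite -{2}(mkseq_nth x0 esI) /mkseq count_map.
  by apply: eq_in_count => m; rewrite mem_iota /common_edge /= => ->.
have VE : size (undup (vsI ++ vsJ)) = size (undup (esI ++ esJ)).
  apply: (size_maximal_paths acyc n_gt1); rewrite ?undup_uniq //.
  - move=> w; rewrite mem_undup mem_cat.
    split=> [/coverV [/memVI|/memVJ] -> //| ]; first by rewrite orbT.
    by case/orP => [/maximal_vsI | /maximal_vsJ].
  - move=> x; rewrite mem_undup mem_cat.
    split=> [/coverE [/memEI|/memEJ] -> //| ]; first by rewrite orbT.
    by case/orP => [/memEI [] | /memEJ []].
have := size_undup_cat uniq_vsI uniq_vsJ; have := size_undup_cat uniq_esI uniq_esJ.
rewrite VE size_vsI size_vsJ.
by move: (size _) (count _ esI) (count _ vsI) (size esI) (size esJ) => a b c x y; clear; lia.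
Qed.

Lemma component_starts : exists i1 i2, [/\ i1 < i2, component_start i1, component_start i2
  & forall m, component_start m -> m = i1 \/ m = i2].
Proof.
set L := filter component_start (iota 0 (size esI).+1).
have sizeL : size L = 2.
  have := count_run_start (size esI) common_edge_vertex.
  by rewrite count_common_vertex size_filter => /eqP; rewrite -addn2 addnC eqn_add2l => /eqP.
have sortedL : sorted ltn L by apply: sorted_filter; [exact: ltn_trans | exact: iota_ltn_sorted].
have memL m : (m \in L) = component_start m.
  rewrite mem_filter mem_iota add0n /=; case st: (component_start m) => //=.
  by move: st => /andP [/andP [+ _] _]; rewrite size_vsI.
move: sizeL sortedL memL; case: L => [|i1 [|i2 [|? ?]]] //= _ /andP [lt _] memL.
exists i1, i2; split=> //; first by rewrite -memL inE eqxx.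
  by rewrite -memL !inE eqxx orbT.
by move=> m; rewrite -memL !inE => /orP [] /eqP ->; [left | right].
Qed.

Local Notation Z := (prod_path o I J).
Local Notation idx w := (index w vsI).

Lemma index_vsI m : m < size vsI -> idx (uI m) = m.
Proof. by move=> hm; rewrite index_uniq. Qed.

Lemma edge_side l v : l < size esI -> maximal_path o v -> endpoint o (eI l) v ->
  idx v = l \/ idx v = l.+1.
Proof.
move=> hl mv ev.
by case: (chain_edge_maximal n_gt1 maximal_vsI uniq_vsI size_vsI adjI (triv x0) hl mv ev) => ->;
  [left | right]; apply: index_vsI; rewrite size_vsI ltnS // ltnW.
Qed.

Lemma prod_path_one_side t p w w' : component_start t -> Z p ->
  maximal_path o w -> maximal_path o w' -> subpath o p w -> subpath o p w' ->
  idx w < t -> t <= idx w' -> False.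
Proof.
move=> st zp mw mw' sw sw' lt le.
have ne : w <> w' by move=> ew; rewrite -ew leqNgt lt in le.
have [y [ey ew ew']] := maximal_paths_common_subpath n_gt1 mw mw' ne sw sw'.
have yI : y \in esI by apply/memEI; split; [exact: endpoint_srcsink ew | rewrite -ey; exact: prod_path_I zp].
have yJ : y \in esJ by apply/memEJ; split; [exact: endpoint_srcsink ew | rewrite -ey; exact: prod_path_J zp].
have hl : index y esI < size esI by rewrite index_mem.
rewrite -(nth_index x0 yI) in ew ew'.
have ce : common_edge (index y esI) by rewrite /common_edge hl nth_index.
have tl : t = (index y esI).+1.
  have := edge_side hl mw ew; have := edge_side hl mw' ew'.
  by move: lt le; move: (idx w) (idx w') (index y esI) => a b c; clear; lia.
by move: st; rewrite /run_start tl /= ce andbF.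
Qed.

Lemma component_start_vertex s : component_start s ->
  [/\ GV o I (uI s), GV o J (uI s) & idx (uI s) = s].
Proof.
case/andP=> /andP [hs uJ] _; split; [exact/memVI/mem_nth | exact/memVJ | exact: index_vsI].
Qed.

Lemma decomposes_of_common_prod :
  (forall w, GV o I w -> GV o J w -> Z w) -> decomposes o (iprod o I J).
Proof.
move=> allZ; have [s [t [lst sts stt _]]] := component_starts.
pose side (cmp : nat -> bool) p := Z p /\ forall w, maximal_path o w -> subpath o p w -> cmp (idx w).
have closed cmp : ext_closed o (side cmp).
  move=> w a b [zw h] ca cb; split; first exact: prod_path_ext_closed.
  by move=> w' mw' sw'; apply: h mw' _; apply: subpath_trans sw'; exists a, b.
have start_side (cmp : nat -> bool) r : component_start r -> cmp r -> side cmp (uI r).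
  case/component_start_vertex => gI gJ ir cr; split; first exact: allZ.
  by move=> w mw /(proj2 gI.1 w (maximal_path_valid mw)) ->; rewrite ir.
apply: (in_span_decomposes acyc (prod_path_valid idealI)
          (Y1 := side (fun i => i < t)) (Y2 := side (fun i => t <= i))).
- by move=> f; apply: iprod_in_span.
- by move=> p [].
- by move=> p [].
- exact: closed.
- exact: closed.
- move=> p zp; case: (classic (forall w, maximal_path o w -> subpath o p w -> idx w < t)).
    by left.
  move=> nlow; right; split=> // w' mw' sw'; rewrite leqNgt; apply/negP => lt'; apply: nlow.
  move=> w mw sw; rewrite ltnNge; apply/negP => le.
  exact: prod_path_one_side stt zp mw' mw sw' sw lt' le.
- move=> p [zp h1] [_ h2].
  have [a [b [ca cb mw]]] := extend_to_maximal acyc (prod_path_valid idealI zp).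
  have sp : subpath o p (pcat a (pcat p b)) by exists a, b.
  by move: (h2 _ mw sp); rewrite leqNgt (h1 _ mw sp).
- by exists (uI s); apply: start_side.
- by exists (uI t); apply: start_side => /=.
Qed.

Lemma prod_path_common_vertex r : Z r -> maximal_path o r ->
  common_vertex (idx r) /\ uI (idx r) = r.
Proof.
move=> zr mr; have rI : r \in vsI by apply/memVI; split=> //; exact: prod_path_I zr.
have rJ : r \in vsJ by apply/memVJ; split=> //; exact: prod_path_J zr.
by rewrite /common_vertex index_mem rI nth_index.
Qed.

Lemma common_edge_prod l : common_edge l -> Z (triv (eI l)).
Proof.
case/andP=> hl eJ; have [gI gJ] : GE o I (eI l) /\ GE o J (eI l).
  by split; [apply/memEI/mem_nth | apply/memEJ].
by exists (triv (eI l)), (triv (eI l)); do !split; [exact: gI.2 | exact: gJ.2].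
Qed.

Lemma ideal_delta_vertex (C : elt n k -> Prop) l m : is_ideal o C -> l < size esI ->
  (m = l \/ m = l.+1) -> C (delta k (triv (eI l))) -> C (delta k (uI m)).
Proof.
move=> idealC hl ml Cl; have [e1 e2 _] := chain_edge_endpoints uniq_vsI size_vsI adjI (triv x0) x0 hl.
apply: (ideal_delta_subpath idealC Cl); apply: endpoint_subpath; last by case: ml => ->.
by apply/maximal_path_valid/maximal_vsI/mem_nth; rewrite size_vsI; case: ml => ->; rewrite ltnS // ltnW.
Qed.

Lemma delta_edge_propagate (C C' : elt n k -> Prop) i d :
  is_ideal o C -> is_ideal o C' -> (forall f, C f -> C' f -> f = @zero_elt n k) ->
  (forall l, common_edge l -> C (delta k (triv (eI l))) \/ C' (delta k (triv (eI l)))) ->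
  C (delta k (triv (eI i))) -> (forall l, i <= l <= i + d -> common_edge l) ->
  C (delta k (triv (eI (i + d)))).
Proof.
move=> idealC idealC' disj summand Ci; elim: d => [|d IH] ce; first by rewrite addn0.
have Cd : C (delta k (triv (eI (i + d)))).
  by apply: IH => l /andP [il ld]; apply: ce; rewrite il (leq_trans ld) // leq_add2l.
have [ce0 ce1] : common_edge (i + d) /\ common_edge (i + d).+1.
  by rewrite -addnS; split; apply: ce; rewrite leq_addr ?leqnn ?leq_add2l ?leqnSn.
rewrite addnS; case: (summand _ ce1) => // C'd.
case: (@delta_neq0 n k (uI (i + d).+1)); apply: disj.
  exact: (ideal_delta_vertex idealC (proj1 (andP ce0)) (or_intror erefl) Cd).
exact: (ideal_delta_vertex idealC' (proj1 (andP ce1)) (or_introl erefl) C'd).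
Qed.

Lemma isolated_component_start w : GV o I w -> GV o J w ->
  (forall x, GE o I x -> GE o J x -> ~ endpoint o x w) ->
  component_start (idx w) /\ ~~ common_edge (idx w).
Proof.
move=> hI hJ iso; have wI : w \in vsI by apply/memVI.
have uw : uI (idx w) = w by rewrite nth_index.
have not_edge l m : common_edge l -> (m = l \/ m = l.+1) -> uI m = w -> False.
  case/andP=> hl eJ ml um; apply: (iso (eI l)); [exact/memEI/mem_nth | exact/memEJ |].
  have [e1 e2 _] := chain_edge_endpoints uniq_vsI size_vsI adjI (triv x0) x0 hl.
  by rewrite -um; case: ml => ->.
split; last by apply/negP => ce; exact: (not_edge _ _ ce (or_introl erefl) uw).
rewrite /run_start /common_vertex index_mem wI uw; apply/andP; split; first exact/memVJ.
case: (idx w) uw => [//|j] uj /=; apply/negP => ce.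
exact: (not_edge _ _ ce (or_intror erefl) uj).
Qed.

Lemma maximal_prod_summand (A B : elt n k -> Prop) i :
  is_ideal o A -> is_ideal o B -> (forall f, A f -> B f -> f = @zero_elt n k) ->
  (forall f, in_span Z f <-> exists a b, A a /\ B b /\ f = (fun p => a p + b p)%R) ->
  nonzero_ideal A ->
  (forall r, Z r -> maximal_path o r ->
     exists m, [/\ r = uI m, i <= m & forall l, i <= l < m -> common_edge l]) ->
  (forall r, Z r -> maximal_path o r -> A (delta k r)) \/
  (forall r, Z r -> maximal_path o r -> B (delta k r)).
Proof.
move=> idealA idealB disj sumZ [f [fA fnz]] maxZ.
have validZ : forall p, Z p -> pvalid o p := prod_path_valid idealI.
have closedZ : ext_closed o Z := prod_path_ext_closed idealI idealJ.
case: (boolP (common_edge i)) => cei; last first.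
  have only_i r : Z r -> maximal_path o r -> r = uI i.
    move=> zr mr; have [m [-> im edges]] := maxZ r zr mr.
    move: im; rewrite leq_eqVlt => /orP [/eqP <- // | lt].
    by have := edges i; rewrite leqnn lt (negbTE cei) => /(_ isT).
  have [g [gA gnz gmax]] :=
    ideal_maximal_element acyc validZ closedZ idealA (summand_l idealB sumZ) fA fnz.
  left=> r zr mr; rewrite (only_i r zr mr); apply: (ideal_delta_of_support idealA gA gnz).
  by move=> q /(in_span_support gmax) [zq mq]; exact: only_i.
have hi : i < size esI by case/andP: cei.
have summand l : common_edge l -> A (delta k (triv (eI l))) \/ B (delta k (triv (eI l))).
  by move=> ce; apply: (delta_triv_summand acyc validZ idealA idealB sumZ); exact: common_edge_prod.
have all_in (C C' : elt n k -> Prop) : is_ideal o C -> is_ideal o C' ->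
    (forall f, C f -> C' f -> f = @zero_elt n k) ->
    (forall l, common_edge l -> C (delta k (triv (eI l))) \/ C' (delta k (triv (eI l)))) ->
    C (delta k (triv (eI i))) -> forall r, Z r -> maximal_path o r -> C (delta k r).
  move=> idealC idealC' dj sm Ci r zr mr; have [m [-> im edges]] := maxZ r zr mr.
  move: im; rewrite leq_eqVlt => /orP [/eqP <- | lt].
    exact: (ideal_delta_vertex idealC hi (or_introl erefl) Ci).
  have [im1 m1m] : i <= m.-1 /\ m.-1 < m by split; lia.
  have /andP [hl _] : common_edge m.-1 by apply: edges; rewrite im1.
  have := delta_edge_propagate (d := m.-1 - i) idealC idealC' dj sm Ci.
  rewrite subnKC // => /(_ _) Cl; apply: (ideal_delta_vertex idealC hl _ (Cl _)).
    by right; rewrite prednK //; lia.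
  by move=> l /andP [il lm]; apply: edges; rewrite il (leq_ltn_trans lm).
case: (summand i cei) => [Ai | Bi]; [left | right].
  exact: all_in idealA idealB disj summand Ai.
apply: all_in idealB idealA _ _ Bi; first by move=> g gB gA; exact: disj.
by move=> l /summand [] ?; [right | left].
Qed.

Lemma prod_of_decomposes_isolated : decomposes o (iprod o I J) ->
  forall w, GV o I w -> GV o J w -> (forall x, GE o I x -> GE o J x -> ~ endpoint o x w) -> Z w.
Proof.
move=> [A [B [idealA [idealB [nzA [nzB [disj sumAB]]]]]]] w hI hJ iso; apply: NNPP => nzw.
have sumZ f : in_span Z f <-> exists a b, A a /\ B b /\ f = (fun p => a p + b p)%R.
  by rewrite -iprod_in_span.
have [stw nFw] := isolated_component_start hI hJ iso.
have [i [sti iw starts]] : exists i, [/\ component_start i, i != idx w &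
    forall s, component_start s -> s = i \/ s = idx w].
  have [s [t [lst sts stt all2]]] := component_starts.
  case: (all2 _ stw) => ew.
  - exists t; split=> //; first by rewrite ew neq_ltn lst orbT.
    by move=> r /all2 [->|->]; rewrite ?ew; [right | left].
  - exists s; split=> //; first by rewrite ew neq_ltn lst.
    by move=> r /all2 [->|->]; rewrite ?ew; [left | right].
have maxZ r : Z r -> maximal_path o r ->
    exists m, [/\ r = uI m, i <= m & forall l, i <= l < m -> common_edge l].
  move=> zr mr; have [cr ur] := prod_path_common_vertex zr mr.
  have rw : idx r != idx w.
    by apply/eqP => e; apply: nzw; rewrite -(nth_index (triv x0) (proj1 (memVI w) hI)) -e ur.
  by exists (idx r); rewrite ur; have [] := run_of_other_start common_edge_vertex starts nFw cr rw.
have validZ : forall p, Z p -> pvalid o p := prod_path_valid idealI.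
have closedZ : ext_closed o Z := prod_path_ext_closed idealI idealJ.
case: (maximal_prod_summand idealA idealB disj sumZ nzA maxZ) => [inA | inB].
  have [g [gA gB]] := ideal_meets_maximal acyc validZ closedZ idealA idealB
    (summand_r idealA sumZ) inA nzB.
  by case; exact: disj.
have [g [gB gA]] := ideal_meets_maximal acyc validZ closedZ idealB idealA
  (summand_l idealB sumZ) inB nzA.
by case; exact: disj.
Qed.

End TwoChains.

Lemma admissible_gt1 n (o : 'I_n -> bool) : admissible o -> 1 < n.
Proof.
move=> [acyc [x _]]; rewrite ltnNge; apply/negP => n1.
have loop (y : 'I_n) : y = x.
  apply: ord_inj; have hy := ltn_ord y; have hx := ltn_ord x.
  by move: (nat_of_ord y) (nat_of_ord x) hy hx n1 => a b; clear; lia.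
apply: (acyc (x, [:: x])) => //.
by rewrite /pvalid /= (loop (asrc o x)) eqxx.
Qed.

Unset Implicit Arguments.

Theorem lemma25 (k : closedFieldType) (n : nat) (o : 'I_n -> bool)
  (I J : elt n k -> Prop) :
  admissible o ->
  type_II o I -> type_II o J ->
  (* Gamma_I \cup Gamma_J = Gamma *)
  (forall p, maximal_path o p -> GV o I p \/ GV o J p) ->
  (forall x, srcsink o x -> GE o I x \/ GE o J x) ->
  (decomposes o (iprod o I J) <->
   (forall w : rpath n,
      GV o I w -> GV o J w ->
      (* w is isolated in Gamma_I \cap Gamma_J *)
      (forall x, GE o I x -> GE o J x -> ~ endpoint o x w) ->
      exists al be : rpath n,
        composable o al be /\ I (delta k al) /\ J (delta k be) /\
        w = pcat al be)).
Proof.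
move=> adm [[idealI _] [linI [[vsI [esI chainI]] _]]] [[idealJ _] [linJ [[vsJ [esJ chainJ]] _]]].
move=> coverV coverE; have n_gt1 := admissible_gt1 adm; have [acyc [x0 _]] := adm.
have [uvI [ueI [szI [mVI [mEI adjI]]]]] := chainI.
have [uvJ [ueJ [szJ [mVJ [mEJ adjJ]]]]] := chainJ.
split=> [D | iso].
  exact: (prod_of_decomposes_isolated x0 n_gt1 acyc idealI idealJ linI linJ coverV coverE
            uvI ueI szI mVI mEI adjI uvJ ueJ szJ mVJ mEJ adjJ D).
apply: (decomposes_of_common_prod x0 n_gt1 acyc idealI idealJ linI linJ coverV coverE
          uvI ueI szI mVI mEI adjI uvJ ueJ szJ mVJ mEJ adjJ).
exact: prod_path_of_isolated iso.
Qed.
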